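(* Let $(S,H)$ be a polarized K3 surface with $H^2=2d$, let $U\in D^b(S)$ be a spherical object with Mukai vector $(a,bH,c)$ for integers $a>0$, $b$, $c$, and let $\tau_U$ be the Hodge isometry of $\widetilde H(S,\mathbb Z)$ induced by the autoequivalence $\mathsf T_U\circ\mathsf T_{\mathcal O_S}\circ(-\otimes\mathcal O_S(H))$. Then $\tau_U^2=\mathrm{id}$ if and only if $d=5$ and $(a,b,c)$ belongs to the set $$\{(F_n+F_{n-2},-F_n,F_{n+2}+F_n),\ (F_{n+2}+F_n,-F_n,F_n+F_{n-2})\ :\ n\ge0\text{ even}\},$$ where $(F_n)_{n\in\mathbb Z}$ is defined by $F_n=1$ for $n\le1$ and $F_{n+2}=F_{n+1}+F_n$ for $n\ge0$.
   Context: An object $U\in D^b(S)$ is spherical if $\mathrm{Ext}^*(U,U)\cong H^*(S^2,\mathbb C)$; $\mathsf T_U$ is the spherical twist $F\mapsto\mathrm{Cone}(\mathrm{RHom}(U,F)\otimes U\to F)$. The Mukai vector is $v(E)=(\mathrm{rk}E,c_1(E),\mathrm{rk}E+c_1(E)^2/2-c_2(E))\in\widetilde H(S,\mathbb Z)$, and autoequivalences act on $\widetilde H(S,\mathbb Z)$ via their cohomological Fourier–Mukai transforms (Hodge isometries for the Mukai pairing). *)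

From HB Require Import structures.
From mathcomp Require Import all_boot all_order all_algebra.
Set Implicit Arguments. Unset Strict Implicit. Unset Printing Implicit Defensive.
Import Order.TTheory GRing.Theory Num.Theory.
Local Open Scope ring_scope.

(* Elements of the Mukai lattice  H~(S,Z) = H^0 + H^2 + H^4  as triples
   (r, l, s) with r, s : int and l in the lattice L = H^2(S,Z). *)
Definition mukai (L : zmodType) := (int * L * int)%type.

Definition mukai_pair (L : zmodType) (form : L -> L -> int)
  (x y : mukai L) : int :=
  let: (r, l, s) := x in let: (r', l', s') := y in
  form l l' - r * s' - r' * s.

(* Cohomological action of the spherical twist T_E (v = v(E), v^2 = -2):
   the reflection  x |-> x + <v,x> v. *)
Definition twistH (L : zmodType) (form : L -> L -> int) (v x : mukai L)
  : mukai L :=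
  let k := mukai_pair form v x in
  let: (r, l, s) := x in let: (a, m, c) := v in
  (r + k * a, l + m *~ k, s + k * c).

(* Cohomological action of (- (x) O_S(H)): multiplication by
   ch(O(H)) = exp(H) = (1, H, H^2/2), here H^2/2 = d. *)
Definition tensorH (L : zmodType) (form : L -> L -> int) (h : L) (d : int)
  (x : mukai L) : mukai L :=
  let: (r, l, s) := x in (r, l + h *~ r, s + form l h + r * d).

Definition vO (L : zmodType) : mukai L := (1, 0, 1).

Definition tauU (L : zmodType) (form : L -> L -> int) (h : L) (d : int)
  (v : mukai L) (x : mukai L) : mukai L :=
  twistH form v (twistH form (vO L) (tensorH form h d x)).

(* fib2 n = (F_n, F_{n+1}) for n : nat. *)
Fixpoint fib2 (n : nat) : int * int :=
  match n with
  | 0%N => (1, 1)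
  | k.+1 => let: (p, q) := fib2 k in (q, p + q)
  end.

Definition fibN (n : nat) : int := (fib2 n).1.

Lemma fibN_0 : fibN 0 = 1. Proof. by []. Qed.
Lemma fibN_1 : fibN 1 = 1. Proof. by []. Qed.
Lemma fibN_SS n : fibN n.+2 = fibN n.+1 + fibN n.
Proof. rewrite /fibN /=; case: (fib2 n) => p q /=. by rewrite addrC. Qed.

Definition Fz (n : int) : int :=
  match n with
  | Posz k => fibN k
  | Negz _ => 1
  end.

From HB Require Import structures.
From mathcomp Require Import all_boot all_order all_algebra.
From mathcomp Require Import ring lra zify.
Import Order.TTheory GRing.Theory Num.Theory.
Local Open Scope ring_scope.
Set Implicit Arguments.
Unset Strict Implicit.

(* Sphericity of v = (a, bH, c) means ac = d b^2 + 1. Only the coordinates (r, l.H, s) of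
   x = (r, l, s) matter for tau_U, which adds a multiple of H to l. The rank of tau_U^2 of
   the point class (0,0,1) is d (b (a + c + db))^2 modulo the sphericity relation; b = 0
   would make v = v(O_S) and tau_U the twist by O(H), which is not an involution, so an
   involution forces a + c + db = 0. Conversely, if a + c + db = 0 then on the span of
   (1,0,0), (0,H,0), (0,0,1) the map tau_U is minus the reflection in a vector u of square
   -2d, while the multiple of H it adds is read off from the pairing with u; this makes
   tau_U an involution.
   With B = -b > 0 the remaining conditions a + c = dB, ac = dB^2 + 1 are solved by Vieta
   jumping: (a, B, c) -> (d(a - B) - a, a - B, a) decreases B until 2B <= a, which only
   happens for d = 5 and (a, B, c) = (2, 1, 3); jumping back up from (2, 1, 3) with d = 5
   runs through the triples (F_n + F_(n-2), F_n, F_(n+2) + F_n), n even. *)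

Section Coordinates.
Variables (D a b c : int).

(* tau_U (r, l, s) = (tau_r, l + tau_h H, tau_s) evaluated at (r, l.H, s), and tau_t is the
   new value of l.H; tau_k is the coefficient of v in the last spherical twist. *)
Definition tau_k (r t s : int) := r * (2 * D * b + a + c * D) + t * (b + c) + s * c.
Definition tau_r (r t s : int) := - (s + t + r * D) + a * tau_k r t s.
Definition tau_h (r t s : int) := r + b * tau_k r t s.
Definition tau_s (r t s : int) := - r + c * tau_k r t s.
Definition tau_t (r t s : int) := t + 2 * D * tau_h r t s.

Lemma rank_tau2_point : a * c = D * b ^+ 2 + 1 ->
  tau_r (tau_r 0 0 1) (tau_t 0 0 1) (tau_s 0 0 1) = D * (b * (a + c + D * b)) ^+ 2.
Proof.
move=> rel.
have -> : tau_r (tau_r 0 0 1) (tau_t 0 0 1) (tau_s 0 0 1) = D * (b * (a + c + D * b)) ^+ 2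
  + (a * c - (D * b ^+ 2 + 1)) * ((a + c + D * b) ^+ 2 + (D - 2) * a * c - D).
  by rewrite /tau_r /tau_t /tau_s /tau_h /tau_k; ring.
by rewrite rel subrr mul0r addr0.
Qed.

(* The pairing with u = (-bD, -c H, D (b + c)). *)
Definition pair_u (r t s : int) := b * D * s - c * t - D * (b + c) * r.

Section Reflection.
Hypothesis sum_eq0 : a + c + D * b = 0.
Hypothesis rel : a * c = D * b ^+ 2 + 1.

Let ea : a = - c - D * b.
Proof. by apply/eqP; rewrite -subr_eq0 -sum_eq0; apply/eqP; ring. Qed.

Let norm_eq0 : c ^+ 2 + b * c * D + b ^+ 2 * D + 1 = 0.
Proof. by transitivity (D * b ^+ 2 + 1 - a * c); [rewrite ea; ring | rewrite rel subrr]. Qed.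

Let eq_mod_norm (q x y : int) :
  x = y + (c ^+ 2 + b * c * D + b ^+ 2 * D + 1) * q -> x = y.
Proof. by rewrite norm_eq0 mul0r addr0. Qed.

Lemma tau_rE r t s : tau_r r t s = - r + b * pair_u r t s.
Proof.
by apply: (@eq_mod_norm ((1 - D) * r - s - t)); rewrite /tau_r /tau_k /pair_u ea; ring.
Qed.

Lemma tau_hE r t s : D * tau_h r t s = c * pair_u r t s - t.
Proof. by apply: (@eq_mod_norm (D * r + t)); rewrite /tau_h /tau_k /pair_u ea; ring. Qed.

Lemma tau_sE r t s : tau_s r t s = - s - (b + c) * pair_u r t s.
Proof. by apply: (@eq_mod_norm (s - r)); rewrite /tau_s /tau_k /pair_u ea; ring. Qed.

Lemma tau_tE r t s : tau_t r t s = - t + 2 * c * pair_u r t s.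
Proof. by rewrite /tau_t -mulrA tau_hE; ring. Qed.

Lemma pair_u_tau r t s :
  pair_u (tau_r r t s) (tau_t r t s) (tau_s r t s) = pair_u r t s.
Proof.
apply: (@eq_mod_norm (- 2 * pair_u r t s)).
by rewrite tau_rE tau_tE tau_sE /pair_u; ring.
Qed.

Lemma tau2_coord_id r t s (R := tau_r r t s) (T := tau_t r t s) (S := tau_s r t s) :
  D != 0 -> [/\ tau_r R T S = r, tau_h r t s + tau_h R T S = 0 & tau_s R T S = s].
Proof.
move=> D_neq0; rewrite /R /T /S.
split.
- by rewrite tau_rE pair_u_tau tau_rE; ring.
- by apply: (mulfI D_neq0); rewrite mulrDr !tau_hE pair_u_tau tau_tE; ring.
- by rewrite tau_sE pair_u_tau tau_sE; ring.
Qed.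

End Reflection.
End Coordinates.

Section MukaiAction.
Variables (L : zmodType) (form : L -> L -> int).
Hypothesis form_addl : forall x y z, form (x + y) z = form x z + form y z.
Hypothesis form_sym : forall x y, form x y = form y x.

Lemma form_nmod_morphism y : nmod_morphism (form^~ y).
Proof.
split=> [|x z]; last exact: form_addl.
by apply: (addrI (form 0 y)); rewrite -form_addl !addr0.
Qed.

Definition form_left y : {additive L -> int} :=
  HB.pack (form^~ y) (GRing.isNmodMorphism.Build L int (form^~ y) (form_nmod_morphism y)).

Lemma form0l y : form 0 y = 0.
Proof. exact: (raddf0 (form_left y)). Qed.

Lemma formMzl x y k : form (x *~ k) y = form x y * k.
Proof. by rewrite -[form _ y]/(form_left y _) raddfMz -mulrzr intz. Qed.

Lemma formDr x y z : form x (y + z) = form x y + form x z.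
Proof. by rewrite form_sym form_addl !(form_sym x). Qed.

Lemma formMzr x y k : form x (y *~ k) = form x y * k.
Proof. by rewrite form_sym formMzl form_sym. Qed.

Variables (h : L) (D a b c : int).
Hypothesis hh : form h h = 2 * D.

Local Notation tau := (tauU form h D (a, h *~ b, c)).

Lemma spherical_rel :
  mukai_pair form (a, h *~ b, c) (a, h *~ b, c) = -2 -> a * c = D * b ^+ 2 + 1.
Proof.
rewrite /mukai_pair formMzl formMzr hh => sph.
have : 2 * (a * c - (D * b ^+ 2 + 1)) = 0.
  by rewrite -(addNr (-2)) -{1}sph; ring.
by move/eqP; rewrite mulf_eq0 subr_eq0 => /orP[// | /eqP].
Qed.

Lemma form_shift_h l k : form (l + h *~ k) h = form l h + 2 * D * k.
Proof. by rewrite form_addl formMzl hh. Qed.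

Lemma mulz_h_eq0 k : D != 0 -> h *~ k = 0 -> k = 0.
Proof.
move=> D_neq0 /(congr1 (form^~ h)) /eqP; rewrite /= formMzl form0l hh.
by rewrite !mulf_eq0 (negbTE D_neq0) => /eqP.
Qed.

Lemma tauU_eq r l s (t := form l h) :
  tau (r, l, s) = (tau_r D a b c r t s, l + h *~ tau_h D a b c r t s, tau_s D a b c r t s).
Proof.
rewrite /tauU /twistH /tensorH /vO /mukai_pair /tau_r /tau_h /tau_s /tau_k /t.
rewrite mul0rz addr0 form0l !(formDr, formMzr, formMzl) (form_sym h l) hh.
congr (_, _, _); try ring.
by rewrite -addrA -mulrzA -mulrzDr; congr (_ + h *~ _); ring.
Qed.

Lemma tauU2_eq r l s (t := form l h) (R := tau_r D a b c r t s)
    (T := tau_t D a b c r t s) (S := tau_s D a b c r t s) :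
  tau (tau (r, l, s)) =
  (tau_r D a b c R T S, l + h *~ (tau_h D a b c r t s + tau_h D a b c R T S),
   tau_s D a b c R T S).
Proof. by rewrite !tauU_eq form_shift_h -addrA -mulrzDr. Qed.

Lemma tauU_involutive_of_sum_eq0 : D != 0 -> a + c + D * b = 0 ->
  a * c = D * b ^+ 2 + 1 -> forall x, tau (tau x) = x.
Proof.
move=> D_neq0 sum_eq0 rel [[r l] s].
rewrite tauU2_eq; have [-> -> ->] := tau2_coord_id sum_eq0 rel r (form l h) s D_neq0.
by rewrite mulr0z addr0.
Qed.

Lemma sum_eq0_of_tauU_involutive : 0 < D -> 0 < a -> a * c = D * b ^+ 2 + 1 ->
  (forall x, tau (tau x) = x) -> a + c + D * b = 0.
Proof.
move=> D_gt0 a_gt0 rel tau_inv.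
have D_neq0 : D != 0 by rewrite gt_eqF.
have := tau_inv (0, 0, 1); rewrite tauU2_eq form0l => -[].
rewrite rank_tau2_point // => /eqP; rewrite mulf_eq0 sqrf_eq0 mulf_eq0 (negbTE D_neq0) /=.
case/orP => /eqP // b0 _ _.
have [a1 c1] : a = 1 /\ c = 1.
  have ac1 : a * c = 1 by rewrite rel b0 expr0n mulr0 add0r.
  have c_gt0 : 0 < c by rewrite -(pmulr_rgt0 _ a_gt0) ac1.
  by clear -a_gt0 c_gt0 ac1; nia.
have := tau_inv (1, 0, 0); rewrite tauU2_eq form0l add0r => -[_ /(mulz_h_eq0 D_neq0)].
suff -> : tau_h D a b c 1 0 0 + tau_h D a b c (tau_r D a b c 1 0 0)
  (tau_t D a b c 1 0 0) (tau_s D a b c 1 0 0) = 2 by [].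
by rewrite a1 b0 c1 /tau_h /tau_r /tau_k; ring.
Qed.

Lemma tauU_involutive_iff : 0 < D -> 0 < a -> a * c = D * b ^+ 2 + 1 ->
  (forall x, tau (tau x) = x) <-> a + c + D * b = 0.
Proof.
move=> D_gt0 a_gt0 rel; split; first exact: sum_eq0_of_tauU_involutive.
by move/tauU_involutive_of_sum_eq0; apply; rewrite // gt_eqF.
Qed.
End MukaiAction.

Definition vieta_up (d : int) (p : int * int * int) : int * int * int :=
  let: (_, B, C) := p in (C, C - B, d * (C - B) - C).

Lemma vieta_base (d a B c : int) : 0 < a -> a <= c -> 0 < B -> 2 * B <= a ->
  a + c = d * B -> a * c = d * B ^+ 2 + 1 -> [/\ d = 5, a = 2, B = 1 & c = 3].
Proof.
move=> a_gt0 le_ac B_gt0 le_2B_a sum prod.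
have disc : 0 <= d * B ^+ 2 * (d - 4) - 4.
  by rewrite -[X in 0 <= X](_ : (a - c) ^+ 2 = _) ?sqr_ge0 //; nia.
have shifted : 0 <= 1 - (d - 4) * B ^+ 2.
  have : 0 <= (a - 2 * B) * (c - 2 * B) by rewrite mulr_ge0 ?subr_ge0 // (le_trans le_2B_a).
  by congr (0 <= _); nia.
have d_gt0 : 0 < d by rewrite -(pmulr_lgt0 _ B_gt0) -sum; lia.
have dB2_gt0 : 0 < d * B ^+ 2 by rewrite mulr_gt0 ?exprn_gt0.
have d_ge5 : 5 <= d by clear -disc dB2_gt0; nia.
have [d5 B1] : d = 5 /\ B = 1 by clear -shifted d_ge5 B_gt0; nia.
move: sum prod; rewrite d5 B1 => sum prod.
by split => //; clear -a_gt0 le_ac sum prod; nia.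
Qed.

Lemma vieta_descend (d a B c : int) : 0 < a -> a <= c -> 0 < B -> a < 2 * B ->
  a + c = d * B -> a * c = d * B ^+ 2 + 1 ->
  let B' := a - B in let a' := d * B' - a in
  [/\ 0 < a' <= a, 0 < B' < B, a' * a = d * B' ^+ 2 + 1 & vieta_up d (a', B', a) = (a, B, c)].
Proof.
move=> a_gt0 le_ac B_gt0 lt_a_2B sum prod B' a'.
have d_gt0 : 0 < d by rewrite -(pmulr_lgt0 _ B_gt0) -sum; lia.
have dB_gt0 := mulr_gt0 d_gt0 B_gt0.
have key : d * B * B' = a ^+ 2 + 1.
  transitivity (a ^+ 2 + a * c - B * (a + c)); first by rewrite /B' -sum; ring.
  by rewrite sum prod; ring.
have B'_gt0 : 0 < B'.
  by rewrite -(pmulr_rgt0 _ dB_gt0) key; have := sqr_ge0 a; lia.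
have prod' : a' * a = d * B' ^+ 2 + 1.
  transitivity (d * B' ^+ 2 + 1 + (d * B * B' - (a ^+ 2 + 1))); first by rewrite /a' /B'; ring.
  by rewrite key subrr addr0.
have le_a'_a : a' <= a.
  have le_sq : a ^+ 2 + 1 <= 2 * a * B by clear -a_gt0 lt_a_2B; nia.
  have : d * B' * B <= 2 * a * B by rewrite mulrAC key.
  by rewrite ler_pM2r // /a' => ?; lia.
split => //.
- apply/andP; split => //.
  by rewrite -(pmulr_lgt0 _ a_gt0) prod'; have := mulr_ge0 (ltW d_gt0) (sqr_ge0 B'); lia.
- by apply/andP; split => //; rewrite /B'; lia.
- by rewrite /= /B' /a'; congr (_, _, _); lia.
Qed.

Definition fib_triple (n : nat) : int * int * int :=
  (Fz n%:Z + Fz (n%:Z - 2), Fz n%:Z, Fz (n%:Z + 2) + Fz n%:Z).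

Lemma fib_triple_SS n : fib_triple n.+2 = vieta_up 5 (fib_triple n).
Proof.
have Fz_add2 m : Fz (m%:Z + 2) = fibN m.+2 by rewrite -PoszD addn2.
rewrite /fib_triple /vieta_up.
have -> : n.+2%:Z - 2 = n%:Z by rewrite -addn2 PoszD addrK.
rewrite !Fz_add2 /= !fibN_SS.
by congr (_, _, _); ring.
Qed.

Lemma fib_triple_sum n : ~~ odd n -> let: (A, B, C) := fib_triple n in A + C = 5 * B.
Proof.
case: n => [|[|n]] // _.
by rewrite fib_triple_SS; case: (fib_triple n) => [[A B] C] /=; ring.
Qed.

Lemma pell_descent (d a B c : int) : 0 < a -> a <= c -> 0 < B ->
  a + c = d * B -> a * c = d * B ^+ 2 + 1 ->
  d = 5 /\ exists2 n, ~~ odd n & (a, B, c) = fib_triple n.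
Proof.
have [N le_BN] : exists N : nat, B <= N%:Z by exists `|B|%N; lia.
elim: N a B c le_BN => [|N IH] a B c le_BN a_gt0 le_ac B_gt0 sum prod; first lia.
case: (ltrP a (2 * B)) => [lt_a_2B | le_2B_a]; last first.
  by have [-> -> -> ->] := vieta_base a_gt0 le_ac B_gt0 le_2B_a sum prod; split => //; exists 0%N.
have /= [/andP[a'_gt0 le_a'_a] /andP[B'_gt0 lt_B'_B] prod' up] :=
  vieta_descend a_gt0 le_ac B_gt0 lt_a_2B sum prod.
have le_B'N : a - B <= N%:Z by lia.
have [d5 [n n_even tn]] := IH _ _ _ le_B'N a'_gt0 le_a'_a B'_gt0 (subrK _ _) prod'.
split => //; exists n.+2; first by rewrite /= negbK.
by rewrite fib_triple_SS -tn -d5; exact: esym up.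
Qed.

Lemma sum_eq0_iff_fib (d a b c : int) : 0 < d -> 0 < a -> a * c = d * b ^+ 2 + 1 ->
  a + c + d * b = 0 <->
  d = 5 /\ exists n : nat, ~~ odd n /\
    ((a, b, c) = (Fz n%:Z + Fz (n%:Z - 2), - Fz n%:Z, Fz (n%:Z + 2) + Fz n%:Z) \/
     (a, b, c) = (Fz (n%:Z + 2) + Fz n%:Z, - Fz n%:Z, Fz n%:Z + Fz (n%:Z - 2))).
Proof.
move=> d_gt0 a_gt0 rel; split => [sum0 | [d5 [n [n_even fam]]]]; last first.
  have := fib_triple_sum n_even; rewrite /fib_triple d5.
  by case: fam => -[-> -> ->] /=; lia.
have sum : a + c = d * - b by rewrite mulrN; lia.
have prod : a * c = d * (- b) ^+ 2 + 1 by rewrite sqrrN.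
have c_gt0 : 0 < c.
  by rewrite -(pmulr_rgt0 _ a_gt0) rel; have := mulr_ge0 (ltW d_gt0) (sqr_ge0 b); lia.
have B_gt0 : 0 < - b by rewrite -(pmulr_rgt0 _ d_gt0) -sum; lia.
case: (lerP a c) => [le_ac | lt_ca].
- have [d5 [n n_even]] := pell_descent a_gt0 le_ac B_gt0 sum prod.
  rewrite /fib_triple => -[-> eB ->]; split => //; exists n; split => //.
  by left; rewrite -[b]opprK eB.
- have [d5 [n n_even]] :=
    pell_descent c_gt0 (ltW lt_ca) B_gt0 (etrans (addrC _ _) sum) (etrans (mulrC _ _) prod).
  rewrite /fib_triple => -[-> eB ->]; split => //; exists n; split => //.
  by right; rewrite -[b]opprK eB.
Qed.

Theorem theoremA16
  (L : zmodType) (form : L -> L -> int)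
  (form_addl : forall x y z, form (x + y) z = form x z + form y z)
  (form_sym : forall x y, form x y = form y x)
  (h : L) (d : nat) (d_gt0 : (0 < d)%N) (hh : form h h = (2 * d)%:Z)
  (a b c : int) (a_gt0 : 0 < a)
  (spherical : mukai_pair form (a, h *~ b, c) (a, h *~ b, c) = -2) :
  (forall x : mukai L,
     tauU form h d%:Z (a, h *~ b, c) (tauU form h d%:Z (a, h *~ b, c) x) = x)
  <->
  (d = 5%N /\
   exists n : nat, ~~ odd n /\
     ((a, b, c) = (Fz n%:Z + Fz (n%:Z - 2), - Fz n%:Z, Fz (n%:Z + 2) + Fz n%:Z)
      \/
      (a, b, c) = (Fz (n%:Z + 2) + Fz n%:Z, - Fz n%:Z, Fz n%:Z + Fz (n%:Z - 2)))).
Proof.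
have D_gt0 : 0 < d%:Z by rewrite ltz_nat.
have hh' : form h h = 2 * d%:Z by rewrite hh PoszM.
have rel := spherical_rel form_addl form_sym hh' spherical.
rewrite (tauU_involutive_iff form_addl form_sym hh' D_gt0 a_gt0 rel).
rewrite (sum_eq0_iff_fib D_gt0 a_gt0 rel).
by split=> -[d5 fam]; split=> //; [case: d5 | rewrite d5].
Qed.
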